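(* For every nonzero integer $n$, \[\left\lfloor\frac{1}{e^{\sqrt2/n}-1}\right\rfloor=\left\lfloor\frac{n}{\sqrt2}-\frac12\right\rfloor.\]
   Context: $\lfloor x\rfloor$ denotes the floor of $x$. *)

From Stdlib Require Import Reals ZArith.
Open Scope R_scope.

(* floor function: Stdlib's Int_part x = up x - 1 is the greatest integer <= x *)
Definition Rfloor (x : R) : Z := Int_part x.

(** With [y = sqrt 2 / |n|], the two Padé bounds [e^y < (2+y)/(2-y)] and
    [e^y > (12+6y+y^2)/(12-6y+y^2)] give
    [1/y - 1/2 < 1/(e^y - 1) < 1/y - 1/2 + y/12], and [1/y - 1/2 = |n|/sqrt 2 - 1/2].
    So the two floors can only differ if a half-integer lies within [y/12] of
    [|n|/sqrt 2].  This is ruled out by the Diophantine nature of [sqrt 2]: for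
    [t = m - p sqrt 2 >= 0] with [m] odd, the integer [m^2 - 2p^2 = t(t + 2p sqrt 2)]
    is odd, hence at least 1, so [t] cannot be small. *)
From Stdlib Require Import Reals Lra Lia Psatz ZArith.
From Coquelicot Require Import Coquelicot.
Open Scope R_scope.

Lemma lt_of_derive_pos (f f' : R -> R) (a b : R) : a < b ->
  (forall t, a <= t <= b -> is_derive f t (f' t)) ->
  (forall t, a < t < b -> 0 < f' t) -> f a < f b.
Proof.
intros hab hder hpos.
destruct (MVT_cor2 f f' a b hab) as [c [hc hac]].
{ intros t ht; apply is_derive_Reals; auto. }
specialize (hpos c hac); nra.
Qed.

Lemma exp_lt_pade11 (y : R) : 0 < y -> (2 - y) * exp y < 2 + y.
Proof.
intros hy.
set (g := fun t => (2 + t) * exp (- t) + t).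
assert (hg : g 0 < g y).
{ apply (lt_of_derive_pos g (fun t => 1 - (1 + t) * exp (- t))); [exact hy | |].
  - intros t _; unfold g; auto_derive; auto; ring.
  - intros t ht.
    assert (1 + t < exp t) by (apply exp_ineq1; lra).
    rewrite exp_Ropp.
    assert (hexp : 0 < exp t) by apply exp_pos.
    apply (Rmult_lt_reg_r (exp t)); [exact hexp |].
    field_simplify; lra. }
unfold g in hg; rewrite Ropp_0, exp_0, exp_Ropp in hg.
assert (hexp : 0 < exp y) by apply exp_pos.
assert ((2 + y) * / exp y * exp y = 2 + y) by (field; lra).
nra.
Qed.

Lemma pade22_lt_exp (y : R) : 0 < y ->
  12 + 6 * y + y * y < (12 - 6 * y + y * y) * exp y.
Proof.
intros hy.
assert (hden : forall t, 0 < 12 - 6 * t + t * t) by (intros t; pose proof (pow2_ge_0 (t - 3)); nra).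
(* [exp (-t) * P(t) / P(-t)] has derivative [- exp (-t) t^4 / P(-t)^2 < 0]. *)
set (g := fun t => - (exp (- t) * (12 + 6 * t + t * t) / (12 - 6 * t + t * t))).
assert (hg : g 0 < g y).
{ apply (lt_of_derive_pos g
    (fun t => exp (- t) * (t * t * t * t) / (12 - 6 * t + t * t) ^ 2)); [exact hy | |].
  - intros t _; specialize (hden t); unfold g; auto_derive; [lra | field; lra].
  - intros t ht; specialize (hden t).
    assert (0 < exp (- t)) by apply exp_pos.
    assert (0 < t * t) by nra.
    apply Rdiv_lt_0_compat; [apply Rmult_lt_0_compat|]; [assumption | nra | nra]. }
unfold g in hg; rewrite Ropp_0, exp_0, exp_Ropp in hg.
specialize (hden y).
assert (hexp : 0 < exp y) by apply exp_pos.
apply Ropp_lt_cancel in hg.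
replace (/ exp y * (12 + 6 * y + y * y) / (12 - 6 * y + y * y))
  with ((12 + 6 * y + y * y) / ((12 - 6 * y + y * y) * exp y)) in hg by (field; lra).
apply (Rmult_lt_compat_r ((12 - 6 * y + y * y) * exp y)) in hg; [|nra].
replace ((12 + 6 * y + y * y) / ((12 - 6 * y + y * y) * exp y)
  * ((12 - 6 * y + y * y) * exp y)) with (12 + 6 * y + y * y) in hg by (field; nra).
lra.
Qed.

Lemma inv_exp_sub1_bounds (y : R) : 0 < y ->
  1 / y - 1 / 2 < 1 / (exp y - 1) < 1 / y - 1 / 2 + y / 12.
Proof.
intros hy.
assert (hE : 1 + y < exp y) by (apply exp_ineq1; lra).
assert (hA := exp_lt_pade11 y hy).
assert (hB := pade22_lt_exp y hy).
split.
- apply (Rmult_lt_reg_r (y * (exp y - 1))); [nra|].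
  field_simplify; [nra | lra | lra].
- apply (Rmult_lt_reg_r (y * (exp y - 1))); [nra|].
  field_simplify; [nra | lra | lra].
Qed.

Lemma inv_exp_opp_sub1 (y : R) : y <> 0 ->
  1 / (exp (- y) - 1) = - 1 - 1 / (exp y - 1).
Proof.
intros hy.
assert (exp y <> 1) by (intros h; apply hy, exp_inv; rewrite exp_0; exact h).
assert (0 < exp y) by apply exp_pos.
rewrite exp_Ropp; field; lra.
Qed.

Lemma sqrt2_half_int_gap (k p : Z) : (1 <= p)%Z ->
  0 <= IZR k + 1 / 2 - IZR p / sqrt 2 ->
  sqrt 2 / (12 * IZR p) <= IZR k + 1 / 2 - IZR p / sqrt 2.
Proof.
intros hp ht.
assert (hP : 1 <= IZR p) by (apply IZR_le; exact hp).
assert (hs2 : sqrt 2 * sqrt 2 = 2) by (apply sqrt_sqrt; lra).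
assert (hs : 0 < sqrt 2) by (apply sqrt_lt_R0; lra).
set (t := IZR (2 * k + 1) - IZR p * sqrt 2).
assert (ht2 : IZR k + 1 / 2 - IZR p / sqrt 2 = t / 2).
{ assert (hdiv : IZR p / sqrt 2 = IZR p * sqrt 2 / 2).
  { replace 2 with (sqrt 2 * sqrt 2) at 3 by exact hs2. field; lra. }
  unfold t; rewrite hdiv, plus_IZR, mult_IZR; simpl (IZR 2); lra. }
rewrite ht2 in ht |- *.
destruct (Rle_or_lt (sqrt 2 / (12 * IZR p)) (t / 2)) as [h|h]; [exact h | exfalso].
assert (htp : t * IZR p < sqrt 2 / 6).
{ apply (Rmult_lt_compat_r (IZR p)) in h; [|lra].
  replace (sqrt 2 / (12 * IZR p) * IZR p) with (sqrt 2 / 12) in h by (field; lra).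
  lra. }
set (m := (2 * k + 1)%Z).
assert (hnorm : IZR (m * m - 2 * p * p) = t * t + 2 * (t * IZR p) * sqrt 2).
{ rewrite minus_IZR, !mult_IZR; unfold t; fold m; simpl (IZR 2); nra. }
assert (hlo : 0 <= IZR (m * m - 2 * p * p)) by (rewrite hnorm; nra).
assert (hhi : IZR (m * m - 2 * p * p) < 1).
{ assert (t <= t * IZR p) by nra.
  assert (t * t < 1 / 3) by nra.
  assert (t * IZR p * sqrt 2 < 1 / 3) by nra.
  rewrite hnorm; lra. }
apply le_IZR in hlo; apply lt_IZR in hhi.
(* [m] is odd, so [m^2 = 2 p^2] is impossible. *)
unfold m in *; nia.
Qed.

Lemma Int_part_eq_of_no_int_between (a x : R) : a <= x ->
  (forall k : Z, a < IZR k <= x -> False) -> Int_part x = Int_part a.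
Proof.
intros hax hgap.
destruct (base_Int_part a) as [hlo hhi].
symmetry; apply Int_part_spec.
split; [|lra].
destruct (Rlt_or_le (x - 1) (IZR (Int_part a))) as [h|h]; [exact h | exfalso].
apply (hgap (Int_part a + 1)%Z); rewrite plus_IZR; lra.
Qed.

Section FloorInvExp.

Variable p : Z.
Hypothesis hp : (1 <= p)%Z.

Let y := sqrt 2 / IZR p.

Let hP : 1 <= IZR p.
Proof. apply IZR_le; exact hp. Qed.

Let hy : 0 < y.
Proof. apply Rdiv_lt_0_compat; [apply sqrt_lt_R0|]; lra. Qed.

Let inv_y : 1 / y = IZR p / sqrt 2.
Proof.
assert (0 < sqrt 2) by (apply sqrt_lt_R0; lra).
unfold y; field; lra.
Qed.

Let y_div12 : y / 12 = sqrt 2 / (12 * IZR p).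
Proof.
assert (0 < sqrt 2) by (apply sqrt_lt_R0; lra).
unfold y; field; lra.
Qed.

Lemma Int_part_inv_exp_pos :
  Int_part (1 / (exp y - 1)) = Int_part (IZR p / sqrt 2 - 1 / 2).
Proof.
destruct (inv_exp_sub1_bounds y hy) as [hlo hhi].
rewrite inv_y in hlo, hhi.
apply Int_part_eq_of_no_int_between; [lra|].
intros k hk.
assert (hgap := sqrt2_half_int_gap k p hp ltac:(lra)).
rewrite <- y_div12 in hgap.
lra.
Qed.

Lemma Int_part_inv_exp_neg :
  Int_part (1 / (exp (- y) - 1)) = Int_part (- (IZR p / sqrt 2) - 1 / 2).
Proof.
destruct (inv_exp_sub1_bounds y hy) as [hlo hhi].
rewrite inv_y in hlo, hhi.
rewrite (inv_exp_opp_sub1 y) by lra.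
symmetry; apply Int_part_eq_of_no_int_between; [lra|].
intros k hk.
assert (hgap := sqrt2_half_int_gap (- k - 1) p hp).
rewrite minus_IZR, opp_IZR, <- y_div12 in hgap.
specialize (hgap ltac:(lra)).
lra.
Qed.

End FloorInvExp.

Theorem mainTheorem14 (n : Z) (hn : n <> 0%Z) :
  Rfloor (1 / (exp (sqrt 2 / IZR n) - 1)) = Rfloor (IZR n / sqrt 2 - 1 / 2).
Proof.
unfold Rfloor.
destruct (Z_lt_le_dec 0 n) as [hpos | hneg].
- apply Int_part_inv_exp_pos; lia.
- assert (hp : (1 <= - n)%Z) by lia.
  assert (hP : 1 <= IZR (- n)) by (apply IZR_le; exact hp).
  assert (hn' : IZR n = - IZR (- n)) by (rewrite opp_IZR; ring).
  rewrite hn'.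
  replace (sqrt 2 / - IZR (- n)) with (- (sqrt 2 / IZR (- n))) by (field; lra).
  replace (- IZR (- n) / sqrt 2) with (- (IZR (- n) / sqrt 2))
    by (unfold Rdiv; ring).
  exact (Int_part_inv_exp_neg (- n) hp).
Qed.
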